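(* Let $(A,\cdot,\circ)$ be a skew brace such that $A = B\circ C$ (i.e. every element of $A$ is of the form $b\circ c$ with $b\in B$, $c\in C$) for some sub-skew braces $B$ and $C$ satisfying all of the following: (1) $B$ and $C$ are trivial skew braces; (2) $B$ and $C$ are normal subgroups of $(A,\circ)$; (3) $B$ and $C$ are right ideals in $A$. Then $A^3 := A*A' = 1$, where $A' = A*A$; that is, $A$ is left nilpotent of index at most $3$.
   Context: A skew brace is a set $A$ with two group operations $\cdot$ (often written by juxtaposition) and $\circ$ such that $a\circ(bc) = (a\circ b)\,a^{-1}\,(a\circ c)$ for all $a,b,c\in A$. The two groups have the same identity $1$; $a^{-1}$ denotes the inverse of $a$ in $(A,\cdot)$ and $\overline{a}$ its inverse in $(A,\circ)$. Define $a*b = a^{-1}(a\circ b)b^{-1}$. For subsets $X,Y\subseteq A$, $X*Y$ denotes the subgroup of $(A,\cdot)$ generated by all $x*y$ with $x\in X$, $y\in Y$. A sub-skew brace is a subset that is a subgroup of both $(A,\cdot)$ and $(A,\circ)$. A skew brace (or sub-skew brace) $B$ is trivial if $a\circ b = ab$ for all $a,b\in B$. A subgroup $I$ of $(A,\cdot)$ is a left ideal in $A$ if $A*I\subseteq I$, and a right ideal in $A$ if $I*A\subseteq I$. *)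

Record SkewBrace := {
  carrier :> Type;
  sb_mul : carrier -> carrier -> carrier;
  sb_inv : carrier -> carrier;
  sb_one : carrier;
  sb_circ : carrier -> carrier -> carrier;
  sb_cinv : carrier -> carrier;
  sb_mulA : forall a b c, sb_mul a (sb_mul b c) = sb_mul (sb_mul a b) c;
  sb_mul1x : forall a, sb_mul sb_one a = a;
  sb_mulx1 : forall a, sb_mul a sb_one = a;
  sb_mulVx : forall a, sb_mul (sb_inv a) a = sb_one;
  sb_mulxV : forall a, sb_mul a (sb_inv a) = sb_one;
  sb_circA : forall a b c, sb_circ a (sb_circ b c) = sb_circ (sb_circ a b) c;
  sb_circ1x : forall a, sb_circ sb_one a = a;
  sb_circx1 : forall a, sb_circ a sb_one = a;
  sb_circVx : forall a, sb_circ (sb_cinv a) a = sb_one;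
  sb_circxV : forall a, sb_circ a (sb_cinv a) = sb_one;
  sb_compat : forall a b c,
    sb_circ a (sb_mul b c) = sb_mul (sb_mul (sb_circ a b) (sb_inv a)) (sb_circ a c)
}.

Section Defs.
Variable A : SkewBrace.

Definition sb_star (a b : A) : A :=
  sb_mul A (sb_mul A (sb_inv A a) (sb_circ A a b)) (sb_inv A b).

Definition is_mul_subgroup (H : A -> Prop) : Prop :=
  H (sb_one A) /\ (forall x y, H x -> H y -> H (sb_mul A x y)) /\
  (forall x, H x -> H (sb_inv A x)).

Definition is_circ_subgroup (H : A -> Prop) : Prop :=
  H (sb_one A) /\ (forall x y, H x -> H y -> H (sb_circ A x y)) /\
  (forall x, H x -> H (sb_cinv A x)).

Definition gen_mul (S : A -> Prop) (x : A) : Prop :=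
  forall H, is_mul_subgroup H -> (forall s, S s -> H s) -> H x.

Definition star_set (X Y : A -> Prop) : A -> Prop :=
  gen_mul (fun z => exists x y, X x /\ Y y /\ z = sb_star x y).

Definition full_set : A -> Prop := fun _ => True.

Definition is_sub_skew_brace (B : A -> Prop) : Prop :=
  is_mul_subgroup B /\ is_circ_subgroup B.

Definition is_trivial_sub (B : A -> Prop) : Prop :=
  forall a b, B a -> B b -> sb_circ A a b = sb_mul A a b.

Definition is_circ_normal (B : A -> Prop) : Prop :=
  is_circ_subgroup B /\
  forall a b, B b -> B (sb_circ A (sb_circ A a b) (sb_cinv A a)).

Definition is_right_ideal (I : A -> Prop) : Prop :=
  is_mul_subgroup I /\ forall x, star_set I full_set x -> I x.

Definition A2 : A -> Prop := star_set full_set full_set.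
Definition A3 : A -> Prop := star_set full_set A2.

End Defs.


(* For a skew brace A put  λ_a(x) = a⁻¹·(a∘x).  Then every λ_a is
   an automorphism of (A,·), a ↦ λ_a is an action of (A,∘), and
   a * b = λ_a(b)·b⁻¹.  Let Fix = {z | λ_a(z) = z for all a}, a subgroup of
   (A,·).  Since A^3 is generated by the a * y with y ∈ A', it suffices to show
   A' ⊆ Fix, i.e. that every generator a * z of A' lies in Fix.
   Write a = b∘c (b ∈ B, c ∈ C).  The heart of the proof is a "shift" lemma:
   for c ∈ C one has λ_c(z) = k·z with k ∈ Fix (and symmetrically for b ∈ B).
   To see it, factor z = u·d with u ∈ B, d ∈ C (possible since B is a right
   ideal); then λ_c(z) = (c * u)·z, and c * u ∈ Fix: writing a = y∘x with
   y ∈ C, x ∈ B, normality of B and triviality of B move λ_x past λ_c, and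
   triviality of C kills λ_y, because c * u ∈ C (C is a right ideal).
   Hence λ_a(z) = λ_b(k·z) = k·λ_b(z) = k·k'·z and a * z = k·k' ∈ Fix. *)

Section SkewBraceAction.

Variable A : SkewBrace.

Local Notation "x · y" := (sb_mul A x y) (at level 40, left associativity).
Local Notation "x ∘ y" := (sb_circ A x y) (at level 40, left associativity).
Local Notation "x ⁻¹" := (sb_inv A x) (at level 2, left associativity, format "x ⁻¹").
Local Notation one := (sb_one A).

Lemma mul_cancel_r (x y z : A) : x · z = y · z -> x = y.
Proof.
  intro E.
  rewrite <- (sb_mulx1 A x), <- (sb_mulx1 A y), <- (sb_mulxV A z), !sb_mulA, E.
  reflexivity.
Qed.

Lemma circ_cancel_l (x y z : A) : z ∘ x = z ∘ y -> x = y.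
Proof.
  intro E.
  rewrite <- (sb_circ1x A x), <- (sb_circ1x A y), <- (sb_circVx A z), <- !sb_circA, E.
  reflexivity.
Qed.

Lemma cinvK (c : A) : sb_cinv A (sb_cinv A c) = c.
Proof.
  apply (circ_cancel_l _ _ (sb_cinv A c)).
  rewrite sb_circxV, sb_circVx. reflexivity.
Qed.

Lemma inv_one : one⁻¹ = one.
Proof. rewrite <- (sb_mulx1 A one⁻¹). apply sb_mulVx. Qed.

Definition lam (a x : A) : A := a⁻¹ · (a ∘ x).

Lemma star_lam (a b : A) : sb_star A a b = lam a b · b⁻¹.
Proof. reflexivity. Qed.

Lemma circ_lam (a x : A) : a ∘ x = a · lam a x.
Proof. unfold lam. rewrite sb_mulA, sb_mulxV, sb_mul1x. reflexivity. Qed.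

Lemma lam_of_circ (a x y : A) : a ∘ x = a · y -> lam a x = y.
Proof. intro E. unfold lam. rewrite E, sb_mulA, sb_mulVx, sb_mul1x. reflexivity. Qed.

Lemma lam_mul (a x y : A) : lam a (x · y) = lam a x · lam a y.
Proof. unfold lam. rewrite sb_compat, !sb_mulA. reflexivity. Qed.

Lemma lam_one (a : A) : lam a one = one.
Proof. unfold lam. rewrite sb_circx1, sb_mulVx. reflexivity. Qed.

Lemma lam_inv (a x : A) : lam a x⁻¹ = (lam a x)⁻¹.
Proof.
  apply (mul_cancel_r _ _ (lam a x)).
  rewrite <- lam_mul, !sb_mulVx, lam_one. reflexivity.
Qed.

Lemma lam_circ (a b x : A) : lam (a ∘ b) x = lam a (lam b x).
Proof.
  apply lam_of_circ.
  rewrite <- sb_circA, (circ_lam b x), sb_compat.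
  unfold lam. rewrite !sb_mulA. reflexivity.
Qed.

Lemma trivial_lam (X : A -> Prop) (x y : A) :
  is_trivial_sub A X -> X x -> X y -> lam x y = y.
Proof. intros HX Hx Hy. apply lam_of_circ, HX; assumption. Qed.

Lemma right_ideal_star (X : A -> Prop) (x a : A) :
  is_right_ideal A X -> X x -> X (sb_star A x a).
Proof.
  intros [_ HX] Hx. apply HX.
  intros H _ HS. apply HS. exists x, a. repeat split; assumption.
Qed.

Lemma normal_conj (X : A -> Prop) (y x : A) :
  is_circ_normal A X -> X x -> X (sb_cinv A y ∘ x ∘ y).
Proof.
  intros [_ HX] Hx. pose proof (HX (sb_cinv A y) x Hx) as Hc.
  rewrite cinvK in Hc. exact Hc.
Qed.

Definition lam_fixed (z : A) : Prop := forall a, lam a z = z.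

Lemma lam_fixed_subgroup : is_mul_subgroup A lam_fixed.
Proof.
  split; [|split].
  - intro a. apply lam_one.
  - intros u v Hu Hv a. rewrite lam_mul, Hu, Hv. reflexivity.
  - intros u Hu a. rewrite lam_inv, Hu. reflexivity.
Qed.

Lemma factorization_swap (X Y : A -> Prop) :
  is_circ_normal A Y ->
  (forall a, exists x y, X x /\ Y y /\ a = x ∘ y) ->
  forall a, exists y x, Y y /\ X x /\ a = y ∘ x.
Proof.
  intros [_ HYn] Hdec a. destruct (Hdec a) as [x [y [Hx [Hy ->]]]].
  exists (x ∘ y ∘ sb_cinv A x), x.
  split; [apply HYn; exact Hy | split; [exact Hx |]].
  rewrite <- sb_circA, sb_circVx, sb_circx1. reflexivity.
Qed.

(* A = X∘Y with X a right ideal gives A = X·Y, since x∘y = (x·(x * y))·y. *)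
Lemma factorization_mul (X Y : A -> Prop) :
  is_right_ideal A X ->
  (forall a, exists x y, X x /\ Y y /\ a = x ∘ y) ->
  forall a, exists x y, X x /\ Y y /\ a = x · y.
Proof.
  intros HXr Hdec a. destruct (Hdec a) as [x [y [Hx [Hy ->]]]].
  exists (x · sb_star A x y), y. split; [| split; [exact Hy |]].
  - destruct (proj1 HXr) as [_ [HXmul _]].
    apply HXmul; [exact Hx | apply right_ideal_star; assumption].
  - rewrite circ_lam, star_lam, <- !sb_mulA, sb_mulVx, sb_mulx1. reflexivity.
Qed.

Section ExactFactorization.

Variables X Y : A -> Prop.
Hypotheses (HXt : is_trivial_sub A X) (HYt : is_trivial_sub A Y).
Hypotheses (HXn : is_circ_normal A X) (HYn : is_circ_normal A Y).
Hypotheses (HXr : is_right_ideal A X) (HYr : is_right_ideal A Y).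
Hypothesis Hdec : forall a, exists x y, X x /\ Y y /\ a = x ∘ y.

(* For x, u ∈ X, λ_x fixes λ_c(u): write x∘c = c∘x' with x' = c̄∘x∘c ∈ X
   (normality), and λ_x' fixes u (triviality of X). *)
Lemma lam_fixes_conjugated (c x u : A) : X x -> X u -> lam x (lam c u) = lam c u.
Proof.
  intros Hx Hu.
  set (x' := sb_cinv A c ∘ x ∘ c).
  assert (Ex' : c ∘ x' = x ∘ c).
  { unfold x'. rewrite !sb_circA, sb_circxV, sb_circ1x. reflexivity. }
  rewrite <- lam_circ, <- Ex', lam_circ.
  rewrite (trivial_lam X x' u HXt (normal_conj X c x HXn Hx) Hu). reflexivity.
Qed.

Lemma star_fixed (c u : A) : Y c -> X u -> lam_fixed (sb_star A c u).
Proof.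
  intros Hc Hu a.
  destruct (factorization_swap X Y HYn Hdec a) as [y [x [Hy [Hx ->]]]].
  rewrite lam_circ, star_lam, lam_mul, lam_inv.
  rewrite (lam_fixes_conjugated c x u Hx Hu), (trivial_lam X x u HXt Hx Hu), <- star_lam.
  apply (trivial_lam Y); [exact HYt | exact Hy | apply right_ideal_star; assumption].
Qed.

Lemma lam_shift (c z : A) : Y c -> exists k, lam_fixed k /\ lam c z = k · z.
Proof.
  intro Hc. destruct (factorization_mul X Y HXr Hdec z) as [u [d [Hu [Hd ->]]]].
  exists (sb_star A c u). split; [apply star_fixed; assumption |].
  rewrite lam_mul, (trivial_lam Y c d HYt Hc Hd), star_lam.
  rewrite <- !sb_mulA, (sb_mulA A u⁻¹ u d), sb_mulVx, sb_mul1x. reflexivity.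
Qed.

End ExactFactorization.

Lemma star_fixed_of_shifts (b c z : A) :
  (exists k, lam_fixed k /\ lam b z = k · z) ->
  (exists k, lam_fixed k /\ lam c z = k · z) ->
  lam_fixed (sb_star A (b ∘ c) z).
Proof.
  intros [kb [Hkb Eb]] [kc [Hkc Ec]].
  rewrite star_lam, lam_circ, Ec, lam_mul, Hkc, Eb, <- !sb_mulA, sb_mulxV, sb_mulx1.
  apply lam_fixed_subgroup; assumption.
Qed.

Lemma A3_trivial_of_A2_fixed :
  (forall y, A2 A y -> lam_fixed y) -> forall x, A3 A x -> x = one.
Proof.
  intros HA2 x Hx. apply Hx.
  - split; [reflexivity | split].
    + intros u v -> ->. apply sb_mul1x.
    + intros u ->. apply inv_one.
  - intros s [a [y [_ [Hy ->]]]].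
    rewrite star_lam, (HA2 y Hy a). apply sb_mulxV.
Qed.

End SkewBraceAction.

Theorem theorem1p3 (A : SkewBrace) (B C : A -> Prop) :
  is_sub_skew_brace A B -> is_sub_skew_brace A C ->
  (forall a : A, exists b c, B b /\ C c /\ a = sb_circ A b c) ->
  is_trivial_sub A B -> is_trivial_sub A C ->
  is_circ_normal A B -> is_circ_normal A C ->
  is_right_ideal A B -> is_right_ideal A C ->
  forall x : A, A3 A x -> x = sb_one A.
Proof.
  intros _ _ Hdec HBt HCt HBn HCn HBr HCr.
  pose proof (factorization_swap A B C HCn Hdec) as HdecCB.
  apply A3_trivial_of_A2_fixed.
  intros y Hy. apply Hy; [apply lam_fixed_subgroup |].
  intros s [a [z [_ [_ ->]]]].
  destruct (Hdec a) as [b [c [Hb [Hc ->]]]].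
  apply star_fixed_of_shifts.
  - exact (lam_shift A C B HCt HBt HCn HBn HCr HBr HdecCB b z Hb).
  - exact (lam_shift A B C HBt HCt HBn HCn HBr HCr Hdec c z Hc).
Qed.
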